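(* Let $G=(V,E)$ be a simple connected graph on $n\ge2$ nodes with all degrees at most $D$, let $e_1\in E$, and let $w:E\to\mathbb{R}_+$. Then there exist a spanning tree $F$ of $G$ with $e_1\in E(F)$ and integers $(k_e: e\in E(F))$ such that $k_{e_1}=1$, $k_e\le D$ for all $e\in E(F)$, $\sum_{e\in E(F)}k_e=|E|$, and $$\sum_{e\in E}w(e)\le\sum_{e\in E(F)}k_e\,w(e).$$ *)

(* A simple graph on a finite vertex type V is given by its
   edge set E : {set {set V}}, each edge being a 2-element vertex set. *)
From HB Require Import structures.
From mathcomp Require Import all_boot all_order all_algebra.
Set Implicit Arguments. Unset Strict Implicit. Unset Printing Implicit Defensive.
Import Order.TTheory GRing.Theory Num.Theory.

Section Graphs.
Variable V : finType.

Definition simple_edges (E : {set {set V}}) : Prop :=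
  forall e, e \in E -> #|e| = 2.

Definition adj (E : {set {set V}}) : rel V := fun x y => (x != y) && ([set x; y] \in E).

Definition connected_graph (E : {set {set V}}) : Prop :=
  forall x y : V, connect (adj E) x y.

Definition degree (E : {set {set V}}) (x : V) : nat := #|[set e in E | x \in e]|.

Definition has_cycle (F : {set {set V}}) : Prop :=
  exists s : seq V, [/\ (3 <= size s)%N, uniq s & cycle (adj F) s].

Definition spanning_tree (E F : {set {set V}}) : Prop :=
  [/\ F \subset E, connected_graph F & ~ has_cycle F].
End Graphs.

From HB Require Import structures.
From mathcomp Require Import all_boot all_order all_algebra.
From mathcomp Require Import zify.
Import Order.TTheory GRing.Theory Num.Theory.
Local Open Scope ring_scope.

(* Run Prim's algorithm from e1, always adding a heaviest edge uv leaving the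
   current vertex set S (u in S, v outside), and charge to uv every edge joining
   v to S.  Such an edge was itself leaving S, hence is not heavier than uv, and
   all edges charged to uv contain v, so there are at most deg v <= D of them.
   The only edge charged to e1 is e1.  Taking k_f to be the number of edges
   charged to f gives the claim. *)

Set Implicit Arguments.
Unset Strict Implicit.
Unset Printing Implicit Defensive.

Section Fibres.
Variables (I J : finType) (A : {set I}) (B : {set J}) (c : I -> J).
Hypothesis cAB : {in A, forall i, c i \in B}.

Lemma sum_card_fibres : (\sum_(j in B) #|[set i in A | c i == j]| = #|A|)%N.
Proof.
rewrite -sum1_card (partition_big c (mem B)) //=.
by apply: eq_bigr => j _; rewrite -sum1_card; apply: eq_bigl => i; rewrite inE.
Qed.

Lemma sum_le_fibres (R : numDomainType) (w : I -> R) (v : J -> R) :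
  {in A, forall i, w i <= v (c i)} ->
  \sum_(i in A) w i <= \sum_(j in B) #|[set i in A | c i == j]|%:R * v j.
Proof.
move=> wv; rewrite (partition_big c (mem B)) //=; apply: ler_sum => j _.
rewrite mulr_natl -sumr_const; under [X in _ <= X]eq_bigl do rewrite inE.
by apply: ler_sum => i /andP[iA /eqP <-]; apply: wv.
Qed.

End Fibres.

Lemma connect_exit_edge (T : finType) (r : rel T) (S : {pred T}) x y :
  connect r x y -> x \in S -> y \notin S ->
  exists2 u, u \in S & exists2 v, v \notin S & r u v.
Proof.
move=> /connectP[p + ->]; elim: p x => [|z p IH] x /=; first by move=> _ ->.
move=> /andP[xz zp] xS yS; have [zS | zNS] := boolP (z \in S).
  exact: IH zp zS yS.
by exists x => //; exists z.
Qed.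

Section Graphs.
Variable V : finType.
Implicit Types (S e : {set V}) (E F : {set {set V}}).

Lemma adjC F : symmetric (adj F).
Proof. by move=> x y; rewrite /adj eq_sym setUC. Qed.

Lemma card2_set2 e v : #|e| = 2%N -> v \in e -> exists2 z, z != v & e = [set z; v].
Proof.
move/eqP/cards2P => [x [y [xy ->]]]; rewrite !inE => /orP[]/eqP->.
  by exists y; rewrite 1?eq_sym 1?setUC.
by exists x.
Qed.

Lemma subsetU1_notin e S v : e \subset v |: S -> v \notin e -> e \subset S.
Proof.
move=> eS ve; apply/subsetP => x xe; move: (subsetP eS x xe).
by rewrite in_setU1 => /orP[/eqP xv|//]; rewrite -xv xe in ve.
Qed.

Lemma adj_pendant F (u v y : V) :
  {in F, forall f : {set V}, v \notin f} -> adj ([set u; v] |: F) v y -> y = u.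
Proof.
move=> vF /andP[vy /setU1P[vyE | vyF]]; last by have := vF _ vyF; rewrite set21.
have : y \in [set u; v] by rewrite -vyE set22.
by rewrite !inE => /orP[/eqP //|/eqP yv]; rewrite yv eqxx in vy.
Qed.

(* A vertex of a cycle has two distinct neighbours on it, but a pendant
   vertex v has the single neighbour u. *)
Lemma acyclic_add_pendant F (u v : V) :
  ~ has_cycle F -> {in F, forall f : {set V}, v \notin f} ->
  ~ has_cycle ([set u; v] |: F).
Proof.
move=> acF vF [s [s3 us cs]]; have [vs | vNs] := boolP (v \in s).
  have [i t st] := rot_to vs.
  rewrite -(rot_cycle i) st in cs; rewrite -(rot_uniq i) st in us.
  move: s3; rewrite -(size_rot i) st.
  case: t {st} cs us => [|y [|z t]] // cs us _.
  move: cs; rewrite /cycle rcons_path => /andP[/andP[vy _] zv].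
  rewrite adjC /= in zv; move: us => /and4P[_ + _ _].
  by rewrite (adj_pendant vF vy) -(adj_pendant vF zv) mem_last.
apply: acF; exists s; split => //.
apply: (sub_in_cycle (P := predC1 v)) cs; last first.
  by apply/allP => x xs; apply: contraNneq vNs => <-.
move=> x y /= xv yv /andP[xy /setU1P[xyE | //]]; last by rewrite /adj xy.
have : v \in [set x; y] by rewrite xyE set22.
by rewrite !inE ![v == _]eq_sym (negbTE xv) (negbTE yv).
Qed.

Record tree_on E S F : Prop := TreeOn {
  tree_sub : F \subset E;
  tree_edges : {in F, forall f : {set V}, f \subset S};
  tree_connect : {in S &, forall x y, connect (adj F) x y};
  tree_acyclic : ~ has_cycle F }.

Lemma tree_on_vertex E x : tree_on E [set x] set0.
Proof.
split=> [|f|x1 y1|[[|y [|z s]] [//= _ _]]]; rewrite ?sub0set ?inE //.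
  by move=> /eqP-> /eqP->.
by rewrite /= /adj inE andbF.
Qed.

Lemma tree_on_extend E S F u v : tree_on E S F -> u \in S -> v \notin S ->
  [set u; v] \in E -> tree_on E (v |: S) ([set u; v] |: F).
Proof.
move=> [FE FS connF acF] uS vS uvE.
have connF' x y : connect (adj F) x y -> connect (adj ([set u; v] |: F)) x y.
  by apply: connect_sub => x1 y1 /andP[xy1 xyF]; rewrite connect1 // /adj xy1 setU1r.
have uv : adj ([set u; v] |: F) u v.
  by rewrite /adj setU11 andbT; apply: contraNneq vS => <-.
split.
- by rewrite subUset sub1set uvE.
- move=> f /setU1P[-> | fF]; last exact: subset_trans (FS f fF) (subsetU1 _ _).
  by apply/subsetP => z; rewrite !inE => /orP[]/eqP->; rewrite ?uS ?eqxx ?orbT.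
- move=> x y; rewrite !in_setU1 => /orP[/eqP-> | xS] /orP[/eqP-> | yS].
  + exact: connect0.
  + by apply: connect_trans (connF' _ _ (connF u y uS yS)); rewrite connect1 // adjC.
  + exact: connect_trans (connF' _ _ (connF x u xS uS)) (connect1 uv).
  + exact/connF'/connF.
- apply: acyclic_add_pendant acF _ => f fF.
  by apply: contra vS; apply: (subsetP (FS f fF)).
Qed.

Lemma tree_on_edge E x y : x != y -> [set x; y] \in E ->
  tree_on E [set x; y] [set [set x; y]].
Proof.
move=> xy xyE; have := tree_on_extend (tree_on_vertex E x) (set11 x) _ xyE.
by rewrite setU0 setUC inE eq_sym; apply.
Qed.

Lemma tree_on_setT E F : tree_on E setT F -> spanning_tree E F.
Proof. by case=> FE _ connF acF; split=> // x y; apply: connF; rewrite inE. Qed.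

End Graphs.

Section Charging.
Variables (V : finType) (R : realDomainType).
Variables (E : {set {set V}}) (e1 : {set V}) (w : {set V} -> R).
Hypotheses (simpleE : simple_edges E) (connE : connected_graph E) (e1E : e1 \in E).
Implicit Types (S e p : {set V}) (F : {set {set V}}) (v y : V).

(* [c e] is the tree edge paying for [e]; only edges inside [S] are charged. *)
Record charging S F (c : {set V} -> {set V}) : Prop := Charging {
  charge_base : e1 \subset S;
  charge_in_tree : forall e, e \in E -> e \subset S -> c e \in F;
  charge_heavier : forall e, e \in E -> e \subset S -> w e <= w (c e);
  charge_e1 : forall e, e \in E -> e \subset S -> (c e == e1) = (e == e1);
  charge_star : forall f, f \in F ->
    exists v, forall e, e \in E -> e \subset S -> c e = f -> v \in e }.

Lemma charging_e1_in S F c : charging S F c -> e1 \in F.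
Proof.
move=> C; have base := charge_base C.
have ce1 : c e1 = e1 by apply/eqP; rewrite (charge_e1 C e1E base).
by rewrite -{1}ce1; exact: (charge_in_tree C e1E base).
Qed.

Lemma charging_init : charging e1 [set e1] (fun=> e1).
Proof.
have sub_e1 e : e \in E -> e \subset e1 -> e = e1.
  by move=> eE eS; apply/eqP; rewrite eqEcard eS (simpleE eE) (simpleE e1E).
have [x xe1] : exists x, x \in e1 by apply/card_gt0P; rewrite simpleE.
split=> //.
- by move=> e _ _; rewrite set11.
- by move=> e eE eS; rewrite (sub_e1 e eE eS).
- by move=> e eE eS; rewrite (sub_e1 e eE eS) !eqxx.
- by move=> f _; exists x => e eE eS _; rewrite (sub_e1 e eE eS).
Qed.

Lemma charging_extend S F c p v : charging S F c -> v \notin S -> v \in p ->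
  p \notin F -> {in E, forall e, v \in e -> e \subset v |: S -> w e <= w p} ->
  charging (v |: S) (p |: F) (fun e => if v \in e then p else c e).
Proof.
move=> C vS vp pF pmax; have base := charge_base C.
have notE1 e : v \in e -> (e == e1) = false.
  move=> ve; apply: contraNF vS => /eqP ee1.
  by rewrite -ee1 in base; apply: (subsetP base).
split.
- exact: subset_trans base (subsetU1 _ _).
- move=> e eE eS; case: ifP => ve; first exact: setU11.
  by rewrite setU1r // (charge_in_tree C eE (subsetU1_notin eS (negbT ve))).
- move=> e eE eS; case: ifP => ve; first exact: pmax.
  exact: (charge_heavier C eE (subsetU1_notin eS (negbT ve))).
- move=> e eE eS; case: ifP => ve.
    by rewrite !notE1.
  exact: (charge_e1 C eE (subsetU1_notin eS (negbT ve))).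
- move=> f /setU1P[-> | fF].
    exists v => e eE eS; case: ifP => [// | ve ce].
    have := charge_in_tree C eE (subsetU1_notin eS (negbT ve)).
    by rewrite ce (negbTE pF).
  have [v1 Hv1] := charge_star C fF.
  exists v1 => e eE eS; case: ifP => ve ce; first by rewrite ce fF in pF.
  exact: Hv1 e eE (subsetU1_notin eS (negbT ve)) ce.
Qed.

Definition cut S := [set e in E | [exists u in S, exists v in ~: S, e == [set u; v]]].

Lemma cut_mem S e v :
  e \in E -> v \notin S -> v \in e -> e \subset v |: S -> e \in cut S.
Proof.
move=> eE vS ve eS; have [z zv ezv] := card2_set2 (simpleE eE) ve.
have zS : z \in S.
  by move: (subsetP eS z); rewrite ezv set21 in_setU1 (negbTE zv); apply.
rewrite inE eE; apply/exists_inP; exists z => //; apply/exists_inP; exists v.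
  by rewrite inE.
by rewrite ezv.
Qed.

Lemma tree_charging_step S F c y : tree_on E S F -> charging S F c -> y \notin S ->
  exists S' F' c', [/\ tree_on E S' F', charging S' F' c' & (#|S| < #|S'|)%N].
Proof.
move=> T C yS.
have [x xe1] : exists x, x \in e1 by apply/card_gt0P; rewrite simpleE.
have xS := subsetP (charge_base C) x xe1.
have [u uS [v vS /andP[_ uvE]]] := connect_exit_edge (connE x y) xS yS.
have uvC : [set u; v] \in cut S.
  rewrite /cut inE uvE; apply/exists_inP; exists u => //.
  by apply/exists_inP; exists v; rewrite ?inE.
have [p pC pmax] := arg_maxP w uvC.
move: (pC : p \in cut S); rewrite inE => /andP[pE /exists_inP[u' u'S]].
move=> /exists_inP[v' + /eqP pdef]; rewrite inE => v'S.
have v'p : v' \in p by rewrite pdef set22.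
have pF : p \notin F.
  by apply: contra v'S => /(tree_edges T) /subsetP; apply.
exists (v' |: S), (p |: F), (fun e => if v' \in e then p else c e); split.
- by rewrite pdef; apply: tree_on_extend; rewrite -?pdef.
- apply: charging_extend => // e eE v'e eS.
  exact: pmax (cut_mem eE v'S v'e eS).
- by rewrite cardsU1 v'S.
Qed.

Lemma tree_charging_total S F c : tree_on E S F -> charging S F c ->
  exists F' c', tree_on E setT F' /\ charging setT F' c'.
Proof.
have [n] := ubnP #|~: S|; elim: n S F c => // n IH S F c ltSn T C.
have [ST | SnT] := eqVneq S setT; first by rewrite ST in T C; exists F, c.
have [y _ yS] : exists2 y, y \in setT & y \notin S.
  by apply/subsetPn; rewrite subTset.
have [S' [F' [c' [T' C' ltSS']]]] := tree_charging_step T C yS.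
apply: IH T' C'; have := cardsC S; have := cardsC S'; lia.
Qed.

End Charging.

Theorem lemma17 (R : realFieldType) (V : finType) (E : {set {set V}}) (D : nat)
    (e1 : {set V}) (w : {set V} -> R) :
  (2 <= #|V|)%N ->
  simple_edges E ->
  connected_graph E ->
  (forall x : V, (degree E x <= D)%N) ->
  e1 \in E ->
  (forall e, e \in E -> 0 <= w e) ->
  exists (F : {set {set V}}) (k : {set V} -> int),
    [/\ spanning_tree E F, e1 \in F & k e1 = 1] /\
    [/\ (forall e, e \in F -> k e <= D%:Z),
        \sum_(e in F) k e = (#|E|)%:Z &
        \sum_(e in E) w e <= \sum_(e in F) (k e)%:~R * w e].
Proof.
move=> _ simpleE connE degD e1E _.
have [a [b [ab e1ab]]] : exists a b, a != b /\ e1 = [set a; b].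
  by apply/cards2P; rewrite simpleE.
have T0 : tree_on E e1 [set e1] by rewrite e1ab; apply: tree_on_edge; rewrite -?e1ab.
have C0 := charging_init w simpleE e1E.
have [F [c [T C]]] := tree_charging_total simpleE connE e1E T0 C0.
have cEF : {in E, forall e, c e \in F}.
  by move=> e eE; apply: (charge_in_tree C eE (subsetT e)).
have fibre_e1 : [set e in E | c e == e1] = [set e1].
  apply/setP => e; rewrite !inE; have [eE | eNE] := boolP (e \in E).
    exact: (charge_e1 C eE (subsetT e)).
  by apply/esym; apply: contraNF eNE => /eqP ->.
exists F, (fun f => #|[set e in E | c e == f]|%:Z); split; split.
- exact: tree_on_setT.
- exact: charging_e1_in C.
- by rewrite fibre_e1 cards1.
- move=> f fF; have [v Hv] := charge_star C fF; rewrite lez_nat.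
  apply: leq_trans (degD v); apply/subset_leq_card/subsetP => e.
  by rewrite !inE => /andP[eE /eqP ce]; rewrite eE (Hv e eE (subsetT e) ce).
- by rewrite -(sum_card_fibres cEF) (big_morph _ PoszD (erefl 0%:Z)).
- under [X in _ <= X]eq_bigr do rewrite -pmulrn.
  apply: (sum_le_fibres (R := R) cEF) => e eE.
  exact: (charge_heavier C eE (subsetT e)).
Qed.
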